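(* Let $(X,d_X)$ and $(Y,d_Y)$ be compact metric spaces and let $f:X\to Y$ be Rakotch contracting. Then the induced map $Pf:(PX,d_{PX})\to(PY,d_{PY})$ is Rakotch contracting.
   Context: For a compact metric space $(X,d_X)$, $PX$ denotes the space of Borel probability measures on $X$ with the metric $d_{PX}(\mu,\eta)=\inf\{\int_{X\times X}d_X(x,y)\,d\lambda:\lambda\in\mathcal B(\mu,\eta)\}$, where $\mathcal B(\mu,\eta)$ is the set of Borel probability measures $\lambda$ on $X\times X$ whose images under the first and second coordinate projections are $\mu$ and $\eta$ respectively. For continuous $f:X\to Y$, $Pf:PX\to PY$ is given by $Pf(\mu)(B)=\mu(f^{-1}(B))$ for Borel $B\subset Y$. A map $g:(X,d_X)\to(Y,d_Y)$ is Rakotch contracting if there is $\varphi:[0,\infty)\to[0,\infty)$ with $d_Y(g(x),g(x'))\le\varphi(d_X(x,x'))$ for all $x,x'$ and $\sup_{a<t<\infty}\varphi(t)/t<1$ for every $a>0$. *)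

From HB Require Import structures.
From mathcomp Require Import all_boot all_order all_algebra.
From mathcomp Require Import all_classical all_reals all_analysis.
Set Implicit Arguments. Unset Strict Implicit. Unset Printing Implicit Defensive.
Import Order.TTheory GRing.Theory Num.Theory.
Local Open Scope classical_set_scope.
Local Open Scope ring_scope.

Section MetricDefs.
Variable R : realType.

Definition is_metric (X : Type) (d : X -> X -> R) : Prop :=
  [/\ (forall x y, 0 <= d x y),
      (forall x y, d x y = 0 <-> x = y),
      (forall x y, d x y = d y x) &
      (forall x y z, d x z <= d x y + d y z)].

Definition mball (X : Type) (d : X -> X -> R) (x : X) (r : R) : set X :=
  [set y | d x y < r].

Definition mopen (X : Type) (d : X -> X -> R) (A : set X) : Prop :=
  forall x, A x -> exists2 r : R, 0 < r & mball d x r `<=` A.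

Definition mcompact (X : Type) (d : X -> X -> R) : Prop :=
  forall C : set (set X), (forall U, C U -> mopen d U) ->
    setT `<=` \bigcup_(U in C) U ->
    exists (n : nat) (U : nat -> set X),
      (forall i, (i < n)%N -> C (U i)) /\
      setT `<=` \bigcup_(i in [set i | (i < n)%N]) U i.

Definition dprod (X Y : Type) (dX : X -> X -> R) (dY : Y -> Y -> R)
  (z z' : X * Y) : R := Num.max (dX z.1 z'.1) (dY z.2 z'.2).

Definition Borel (X : pointedType) (d : X -> X -> R) :=
  g_sigma_algebraType (mopen d).

(* PX : Borel probability measures on X, seen as set functions *)
Definition Prob (X : pointedType) (d : X -> X -> R) : set (set X -> \bar R) :=
  [set m | exists P : probability (Borel d) R,
    forall A : set (Borel d), measurable A -> P A = m A].

Definition couplings (X : pointedType) (d : X -> X -> R)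
  (mu eta : set X -> \bar R) : set (probability (Borel (dprod d d)) R) :=
  [set lam | (forall A : set (Borel d), measurable A ->
                 lam (fst @^-1` A) = mu A) /\
             (forall A : set (Borel d), measurable A ->
                 lam (snd @^-1` A) = eta A)].
Arguments couplings {X} d mu eta.

(* Kantorovich metric d_PX (finite for compact X) *)
Definition dP (X : pointedType) (d : X -> X -> R)
  (mu eta : set X -> \bar R) : R :=
  fine (ereal_inf
    ((fun lam : probability (Borel (dprod d d)) R =>
        (\int[lam]_(z in setT) ((d z.1 z.2)%:E))%E) @` couplings d mu eta)).

Definition Pf (X Y : Type) (f : X -> Y) (mu : set X -> \bar R) :
  set Y -> \bar R := fun B => mu (f @^-1` B).

Definition rakotch_on (S T : Type) (A : set S) (B : set T)
  (dA : S -> S -> R) (dB : T -> T -> R) (g : S -> T) : Prop :=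
  (forall x, A x -> B (g x)) /\
  exists phi : R -> R,
    [/\ (forall t, 0 <= t -> 0 <= phi t),
        (forall x x', A x -> A x' -> dB (g x) (g x') <= phi (dA x x')) &
        (forall a, 0 < a -> exists2 c : R, c < 1 &
            forall t, a < t -> phi t / t <= c)].

Definition rakotch (S T : Type) (dA : S -> S -> R) (dB : T -> T -> R)
  (g : S -> T) : Prop := rakotch_on setT setT dA dB g.

End MetricDefs.

From HB Require Import structures.
From mathcomp Require Import all_boot all_order all_algebra.
From mathcomp Require Import all_classical all_reals all_analysis.
From mathcomp Require Import measurable_realfun.
From mathcomp Require Import ring lra.
Import Order.TTheory GRing.Theory Num.Theory.
Local Open Scope classical_set_scope.
Local Open Scope ring_scope.

(* A Rakotch contraction f is nonexpansive, so f and f x f are Borel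
   measurable and push couplings of mu, eta forward to couplings of Pf mu,
   Pf eta.  With C b := sup_{u > b} phi(u)/u, which is < 1 and nonincreasing
   in b > 0, every pair of points satisfies
     d(f x, f x') <= C b * d(x, x') + (1 - C b) * b.
   Integrating against a nearly optimal coupling with b = t/2, where
   t = d_PX(mu, eta), gives d_PY(Pf mu, Pf eta) <= t (1 + C (t/2)) / 2, and this
   is again a Rakotch modulus. *)

Section MetricSpace.
Context {R : realType} {X : pointedType} {d : X -> X -> R}.
Hypothesis md : is_metric d.

Lemma mball_mopen x r : mopen d (mball d x r).
Proof.
case: md => _ _ _ d_tri y /= xy; exists (r - d x y); first by rewrite subr_gt0.
move=> z; rewrite /mball /= => yz; have := d_tri x y z; lra.
Qed.

Lemma mcompact_bounded : mcompact d -> exists2 D, 0 <= D & forall x y, d x y <= D.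
Proof.
case: md => d_ge0 d_eq0 d_sym d_tri cX.
have [|| n [U [CU cover]]] := cX [set B | exists y, B = mball d y 1].
- by move=> _ [y ->]; exact: mball_mopen.
- move=> x _; exists (mball d x 1); first by exists x.
  by rewrite /mball /= (proj2 (d_eq0 x x) erefl).
have /choice[center U_ball] : forall i, exists y, (i < n)%N -> U i = mball d y 1.
  move=> i; case: (ltnP i n) => [/CU[y ->]|_]; first by exists y.
  by exists point.
pose M := \big[Num.max/0]_(ij : 'I_n * 'I_n) d (center ij.1) (center ij.2).
suff M_bound : forall x y, d x y <= 2 + M.
  by exists (2 + M) => //; exact: le_trans (d_ge0 point point) (M_bound _ _).
move=> x y.
have [i /= ltin Ux] := cover x I; have [j /= ltjn Uy] := cover y I.
rewrite U_ball // /mball /= in Ux; rewrite U_ball // /mball /= in Uy.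
have := le_bigmax 0 (fun ij : 'I_n * 'I_n => d (center ij.1) (center ij.2))
  (Ordinal ltin, Ordinal ltjn); rewrite -/M /=.
have := d_tri x (center i) y; have := d_tri (center i) (center j) y.
by rewrite (d_sym x (center i)); lra.
Qed.

End MetricSpace.

Section BorelMeasurability.
Context {R : realType}.

Lemma mopen_measurable (Z : pointedType) (d : Z -> Z -> R) (A : set Z) :
  mopen d A -> measurable (A : set (Borel d)).
Proof. exact: sub_sigma_algebra. Qed.

Lemma nonexpansive_measurable {Z W : pointedType} {dZ : Z -> Z -> R}
    {dW : W -> W -> R} {g : Z -> W} :
  (forall z z', dW (g z) (g z') <= dZ z z') ->
  measurable_fun setT (g : Borel dZ -> Borel dW).
Proof.
move=> g_nonexp.
apply: (@measurability _ _ (Borel dZ) (Borel dW) _ _ (mopen dW)) => //.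
move=> _ [B oB <-].
rewrite setTI; apply: mopen_measurable => z /oB[r r_gt0 ballB].
by exists r => // z' zz'; apply: ballB; exact: le_lt_trans (g_nonexp z z') _.
Qed.

Lemma lipschitz_measurable (Z : pointedType) (d : Z -> Z -> R) (h : Z -> R)
    (K : R) :
  0 < K -> (forall z z', h z - h z' <= K * d z z') ->
  measurable_fun setT (h : Borel d -> R).
Proof.
move=> K_gt0 h_lip; apply: (measurability _ (RGenOInfty.measurableE R)) => //.
move=> _ [_ [x ->] <-]; rewrite setTI; apply: mopen_measurable.
move=> z /=; rewrite in_itv /= andbT => xz.
exists ((h z - x) / K); first by rewrite divr_gt0 // subr_gt0.
move=> z'; rewrite /mball /= in_itv /= andbT ltr_pdivlMr // mulrC => zz'.
by have := h_lip z z'; lra.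
Qed.

Lemma dprod_map_nonexpansive {X Y : Type} {dX : X -> X -> R}
    {dY : Y -> Y -> R} {f : X -> Y} :
  (forall x x', dY (f x) (f x') <= dX x x') ->
  forall z z', dprod dY dY (f z.1, f z.2) (f z'.1, f z'.2) <= dprod dX dX z z'.
Proof.
move=> f_nonexp z z'; rewrite /dprod /= ge_max !le_max.
by rewrite !f_nonexp orbT.
Qed.

Lemma metric_measurable {Z : pointedType} {d : Z -> Z -> R} :
  is_metric d ->
  measurable_fun [set: Borel (dprod d d)] (fun z => (d z.1 z.2)%:E).
Proof.
case=> _ _ d_sym d_tri; apply/measurable_EFinP.
apply: (@lipschitz_measurable _ _ _ 2) => // z z'.
have dz1 : d z.1 z'.1 <= dprod d d z z' by rewrite le_max lexx.
have dz2 : d z.2 z'.2 <= dprod d d z z' by rewrite le_max lexx orbT.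
have := d_tri z.1 z'.1 z.2; have := d_tri z'.1 z'.2 z.2.
by rewrite (d_sym z'.2 z.2); lra.
Qed.

End BorelMeasurability.

Section Kantorovich.
Context {R : realType} {Z : pointedType} {d : Z -> Z -> R}.
Hypothesis md : is_metric d.

Let cost (lam : probability (Borel (dprod d d)) R) :=
  (\int[lam]_(z in setT) (d z.1 z.2)%:E)%E.

Let cost_ge0 lam : (0 <= cost lam)%E.
Proof. by apply: integral_ge0 => z _; rewrite lee_fin; case: md. Qed.

Lemma dP_le {mu eta lam} r :
  couplings (d:=d) mu eta lam -> (cost lam <= r%:E)%E -> dP d mu eta <= r.
Proof.
move=> lam_mu_eta cost_le; rewrite /dP.
set S := (X in ereal_inf X).
have inf_ge0 : (0 <= ereal_inf S)%E.
  by apply: le_ereal_inf_tmp => _ [lam' _ <-]; exact: cost_ge0.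
have : (ereal_inf S <= r%:E)%E.
  by apply: ge_ereal_inf; exists (cost lam) => //; exists lam.
by move: inf_ge0; case: (ereal_inf S) => [s| |] //=; rewrite lee_fin.
Qed.

Lemma dP_approx {mu eta e} : 0 < dP d mu eta -> 0 < e ->
  exists2 lam, couplings (d:=d) mu eta lam & (cost lam < (dP d mu eta + e)%:E)%E.
Proof.
rewrite /dP; set S := (X in ereal_inf X).
case E: (ereal_inf S) => [s| |] /=; rewrite ?ltxx // => s_gt0 e_gt0.
have : (ereal_inf S < (s + e)%:E)%E by rewrite E lte_fin ltrDl.
by case/ereal_inf_lt => _ [lam lam_mu_eta <-]; exists lam.
Qed.

Lemma dP_le_bound D mu eta :
  (forall z z', d z z' <= D) -> 0 <= D -> dP d mu eta <= D.
Proof.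
move=> d_le_D D_ge0; have [dP_le0|dP_gt0] := leP (dP d mu eta) 0.
  exact: le_trans dP_le0 D_ge0.
have [lam lam_mu_eta _] := dP_approx dP_gt0 ltr01.
apply: (dP_le _ lam_mu_eta).
apply: (@le_trans _ _ (\int[lam]_(z in setT) (cst D%:E) z)%E).
  apply: ge0_le_integral => //.
  - by move=> z _; rewrite lee_fin; case: md.
  - exact: metric_measurable.
  - by move=> z _; rewrite lee_fin.
by rewrite integral_cst // [X in (_ * X)%E]probability_setT mule1.
Qed.

End Kantorovich.

Lemma probability_integral_affine (R : realType) d (T : measurableType d)
    (P : probability T R) (h : T -> \bar R) (s c : R) :
  0 <= s -> 0 <= c -> measurable_fun setT h -> (forall z, 0 <= h z)%E ->
  (\int[P]_(z in setT) (s%:E * h z + c%:E) =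
   s%:E * \int[P]_(z in setT) h z + c%:E)%E.
Proof.
move=> s_ge0 c_ge0 mh h_ge0.
rewrite ge0_integralD //; last 2 first.
- by move=> z _; rewrite mule_ge0.
- exact: measurable_funeM.
rewrite ge0_integralZl //.
by rewrite integral_cst // [X in (c%:E * X)%E]probability_setT mule1.
Qed.

Definition mfun_of d d' (T : measurableType d) (T' : measurableType d')
  (g : T -> T') (mg : measurable_fun setT g) : {mfun T >-> T'} :=
  HB.pack g (isMeasurableFun.Build _ _ _ _ g mg).
Arguments mfun_of {d d' T T' g}.

Section Pushforward.
Context {R : realType} {X Y : pointedType}.
Context {dX : X -> X -> R} {dY : Y -> Y -> R} {f : X -> Y}.
Hypotheses (mX : is_metric dX) (mY : is_metric dY).
Hypothesis f_nonexp : forall x x', dY (f x) (f x') <= dX x x'.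

Let f_measurable := nonexpansive_measurable f_nonexp.
Let f2_measurable := nonexpansive_measurable (dprod_map_nonexpansive f_nonexp).

Let preimage_measurable (A : set (Borel dY)) :
  measurable A -> measurable (f @^-1` A : set (Borel dX)).
Proof. by move=> mA; rewrite -(setTI (f @^-1` A)); exact: f_measurable. Qed.

Lemma Pf_Prob mu : Prob dX mu -> Prob dY (Pf f mu).
Proof.
case=> P P_mu.
exists (Probability.clone _ _ _ (distribution P (mfun_of f_measurable)) _).
by move=> A mA; rewrite /distribution /pushforward /Pf /= -P_mu //;
  exact: preimage_measurable.
Qed.

Lemma dP_Pf_le {mu eta lam} r : couplings (d:=dX) mu eta lam ->
  (\int[lam]_(z in setT) (dY (f z.1) (f z.2))%:E <= r%:E)%E ->
  dP dY (Pf f mu) (Pf f eta) <= r.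
Proof.
case=> lam1 lam2 cost_le.
apply: (dP_le mY (lam := distribution lam (mfun_of f2_measurable))).
  by split=> A mA; rewrite /distribution /pushforward /Pf /=;
    [apply: lam1 | apply: lam2]; exact: preimage_measurable.
rewrite /distribution ge0_integral_pushforward //.
- exact: metric_measurable.
- by move=> z _; rewrite lee_fin; case: mY.
Qed.

Lemma dP_Pf_le_affine mu eta s c :
  0 <= s -> 0 <= c -> (forall x x', dY (f x) (f x') <= s * dX x x' + c) ->
  0 < dP dX mu eta -> dP dY (Pf f mu) (Pf f eta) <= s * dP dX mu eta + c.
Proof.
move=> s_ge0 c_ge0 f_affine dP_gt0; set t := dP dX mu eta.
apply/ler_addgt0Pr => e e_gt0.
have e'_gt0 : 0 < e / (s + 1) by rewrite divr_gt0 // ltr_wpDl.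
have [lam lam_mu_eta cost_lt] := dP_approx dP_gt0 e'_gt0.
apply: (le_trans (dP_Pf_le (s * (t + e / (s + 1)) + c) lam_mu_eta _)).
  apply: (@le_trans _ _ (\int[lam]_(z in setT)
      (s%:E * (dX z.1 z.2)%:E + c%:E))%E).
    apply: ge0_le_integral => //.
    - by move=> z _; rewrite lee_fin; case: mY.
    - exact: measurableT_comp (metric_measurable mY) f2_measurable.
    - exact: emeasurable_funD (measurable_funeM _ (metric_measurable mX))
        (measurable_cst _).
    - by move=> z _; rewrite -EFinM -EFinD lee_fin; exact: f_affine.
  rewrite probability_integral_affine //; last 2 first.
  - exact: metric_measurable.
  - by move=> z; rewrite lee_fin; case: mX.
  by rewrite EFinD EFinM leeD2r // lee_wpmul2l // ltW.
have : s * (e / (s + 1)) <= e.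
  by rewrite mulrA ler_pdivrMr ?ltr_wpDl // mulrDr mulr1 mulrC lerDl ltW.
by rewrite mulrDr; lra.
Qed.

End Pushforward.

Section RakotchModulus.
Context {R : realType} {phi : R -> R}.
Hypothesis phi_ge0 : forall t, 0 <= t -> 0 <= phi t.
Hypothesis phi_ratio : forall a, 0 < a ->
  exists2 c : R, c < 1 & forall t, a < t -> phi t / t <= c.

Definition ratio_sup (b : R) : R := sup [set phi u / u | u in [set u | b < u]].

Let ratios_neq0 b : [set phi u / u | u in [set u | b < u]] !=set0.
Proof. by exists (phi (b + 1) / (b + 1)); exists (b + 1) => //=; lra. Qed.

Lemma le_ratio_sup {b u} : 0 < b -> b < u -> phi u / u <= ratio_sup b.
Proof.
move=> b_gt0 bu; apply: sup_upper_bound; last by exists u.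
split; first exact: ratios_neq0.
have [c _ phi_c] := phi_ratio _ b_gt0.
by exists c => _ [v /= bv <-]; exact: phi_c.
Qed.

Lemma ratio_sup_lt1 {b} : 0 < b -> ratio_sup b < 1.
Proof.
move=> b_gt0; have [c c_lt1 phi_c] := phi_ratio _ b_gt0.
apply: le_lt_trans c_lt1; apply: ge_sup; first exact: ratios_neq0.
by move=> _ [u /= bu <-]; exact: phi_c.
Qed.

Lemma ratio_sup_ge0 {b} : 0 < b -> 0 <= ratio_sup b.
Proof.
move=> b_gt0; have b_lt : b < b + 1 by lra.
by apply: le_trans (le_ratio_sup b_gt0 b_lt); rewrite divr_ge0 ?phi_ge0; lra.
Qed.

Lemma ratio_sup_le {a b} : 0 < a -> a <= b -> ratio_sup b <= ratio_sup a.
Proof.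
move=> a_gt0 ab; apply: ge_sup; first exact: ratios_neq0.
by move=> _ [u /= bu <-]; apply: le_ratio_sup => //; exact: le_lt_trans bu.
Qed.

Lemma modulus_lt u : 0 < u -> phi u < u.
Proof.
move=> u_gt0; have u2_gt0 : 0 < u / 2 by rewrite divr_gt0.
have u2_lt_u : u / 2 < u by lra.
have := le_lt_trans (le_ratio_sup u2_gt0 u2_lt_u) (ratio_sup_lt1 u2_gt0).
by rewrite ltr_pdivrMr // mul1r.
Qed.

Lemma le_ratio_sup_affine b u v : 0 < b -> 0 <= u -> v <= phi u -> v <= u ->
  v <= ratio_sup b * u + (1 - ratio_sup b) * b.
Proof.
move=> b_gt0 u_ge0 v_phi v_u.
have C_ge0 := ratio_sup_ge0 b_gt0; have C_lt1 := ratio_sup_lt1 b_gt0.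
have [u_le_b|b_lt_u] := leP u b.
  have : 0 <= (1 - ratio_sup b) * (b - u) by apply: mulr_ge0; lra.
  lra.
have := le_ratio_sup b_gt0 b_lt_u; rewrite ler_pdivrMr; last lra.
have : 0 <= (1 - ratio_sup b) * b by apply: mulr_ge0; lra.
lra.
Qed.

(* At t <= 0 the modulus only has to dominate d_PY; a bound D on the diameter
   of Y does so without having to construct any coupling. *)
Definition kantorovich_modulus (D t : R) : R :=
  if t <= 0 then D else ratio_sup (t / 2) * t + (1 - ratio_sup (t / 2)) * (t / 2).

Lemma kantorovich_modulus_ge0 D t :
  0 <= D -> 0 <= t -> 0 <= kantorovich_modulus D t.
Proof.
rewrite /kantorovich_modulus => D_ge0 t_ge0; case: (leP t 0) => // t_gt0.
have t2_gt0 : 0 < t / 2 by rewrite divr_gt0.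
have := ratio_sup_ge0 t2_gt0; have := ratio_sup_lt1 t2_gt0.
nra.
Qed.

Lemma kantorovich_modulus_ratio D a : 0 < a ->
  exists2 c : R, c < 1 & forall t, a < t -> kantorovich_modulus D t / t <= c.
Proof.
move=> a_gt0; have a2_gt0 : 0 < a / 2 by rewrite divr_gt0.
exists ((1 + ratio_sup (a / 2)) / 2); first by have := ratio_sup_lt1 a2_gt0; lra.
move=> t a_lt_t; have t_gt0 : 0 < t by lra.
rewrite /kantorovich_modulus (leNgt t 0) t_gt0 /=.
have -> : (ratio_sup (t / 2) * t + (1 - ratio_sup (t / 2)) * (t / 2)) / t =
    (1 + ratio_sup (t / 2)) / 2 by field; rewrite gt_eqF.
have a2_le_t2 : a / 2 <= t / 2 by lra.
by have := ratio_sup_le a2_gt0 a2_le_t2; lra.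
Qed.

End RakotchModulus.
Arguments ratio_sup {R} phi b.
Arguments kantorovich_modulus {R} phi D t.

Lemma rakotch_nonexpansive {R : realType} {X Y : Type} {dX : X -> X -> R}
    {dY : Y -> Y -> R} {f : X -> Y} :
  is_metric dX -> is_metric dY -> rakotch dX dY f ->
  forall x x', dY (f x) (f x') <= dX x x'.
Proof.
case=> dX_ge0 dX_eq0 _ _ [_ dY_eq0 _ _] [_ [phi [phi_ge0 f_phi phi_ratio]]] x x'.
have [/dX_eq0 <-|dX_gt0] := eqVneq (dX x x') 0.
  by rewrite (proj2 (dY_eq0 _ _) erefl).
apply/ltW/(le_lt_trans (f_phi x x' I I))/(modulus_lt phi_ratio).
by rewrite lt0r dX_gt0 dX_ge0.
Qed.

Theorem lemma2p1 (R : realType) (X Y : pointedType)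
  (dX : X -> X -> R) (dY : Y -> Y -> R)
  (mX : is_metric dX) (mY : is_metric dY)
  (cX : mcompact dX) (cY : mcompact dY)
  (f : X -> Y) :
  rakotch dX dY f ->
  rakotch_on (Prob dX) (Prob dY) (dP dX) (dP dY) (Pf f).
Proof.
move=> f_rakotch; have f_nonexp := rakotch_nonexpansive mX mY f_rakotch.
have [_ [phi [phi_ge0 f_phi phi_ratio]]] := f_rakotch.
have [D D_ge0 dY_le_D] := mcompact_bounded mY cY.
split=> [mu|]; first exact: Pf_Prob.
exists (kantorovich_modulus phi D); split.
- by move=> t; apply: kantorovich_modulus_ge0.
- move=> mu eta _ _; rewrite /kantorovich_modulus.
  case: (leP (dP dX mu eta) 0) => [_|t_gt0]; first exact: dP_le_bound.
  have t2_gt0 : 0 < dP dX mu eta / 2 by rewrite divr_gt0.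
  have C_ge0 := ratio_sup_ge0 phi_ge0 phi_ratio t2_gt0.
  have C_lt1 := ratio_sup_lt1 phi_ratio t2_gt0.
  apply: dP_Pf_le_affine => //; first by apply: mulr_ge0; lra.
  move=> x x'; apply: le_ratio_sup_affine => //; first by case: mX.
  exact: f_phi.
- exact: kantorovich_modulus_ratio.
Qed.
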